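(* Let $T$ be a regular tournament of order $2n+1$, let $S\subseteq V(T)$ with $k=|S|$, and let $x,y$ be two distinct vertices in $V(T)\setminus S$. Then: (i) If $n\geq 3$ and $k\leq \frac{1}{3}(n-1)$, then $T-S$ contains an $(x,y)$-path of length $3$, unless $T$ is isomorphic to a tournament from $\mathcal G$. (ii) If $n\geq 5$, $k\leq \frac{1}{2}n$, and $T-S$ contains no $(x,y)$-path of length $3$, then $T-S$ contains an $(x,y)$-path of length $4$.
   Context: A tournament is regular if every vertex has outdegree equal to indegree. $T-S$ is the subtournament induced by $V(T)\setminus S$. Paths are directed and simple; length = number of arcs. The family $\mathcal G$ consists of the regular tournaments of order $6k+3\geq 9$ whose vertex set is partitioned as $\{x,y,z\}\cup A\cup B\cup C\cup S$ with $|A|=|C|=2k-1$, $|B|=k+2$, $|S|=k$, such that the subtournaments induced by $A$, by $C$ and by $\{z\}\cup B\cup S$ are regular, and (writing $X\to Y$ for ''every vertex of $X$ dominates every vertex of $Y$'') $A\to B\cup S$, $B\cup S\to C$, $C\to A$, $C\to z$, $z\to A$, $x\to \{y,z\}\cup A\cup S$, $\{x,z\}\cup C\cup S\to y$, $y\to A\cup B$, and $B\cup C\to x$. *)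

From mathcomp Require Import all_boot.
Set Implicit Arguments. Unset Strict Implicit. Unset Printing Implicit Defensive.

(* A tournament on a finite vertex type V is given by its arc relation T:
   T u v means "u dominates v" (arc u -> v). *)
Definition tournament (V : finType) (T : rel V) : Prop :=
  (forall u v, T u v -> ~~ T v u) /\ (forall u v, u != v -> T u v || T v u).

Definition outdeg (V : finType) (T : rel V) (v : V) := #|[set w | T v w]|.
Definition indeg (V : finType) (T : rel V) (v : V) := #|[set w | T w v]|.

Definition regular (V : finType) (T : rel V) : Prop :=
  forall v, outdeg T v = indeg T v.

Definition regular_on (V : finType) (T : rel V) (X : {set V}) : Prop :=
  forall v, v \in X -> #|[set w in X | T v w]| = #|[set w in X | T w v]|.

Definition dom (V : finType) (T : rel V) (X Y : {set V}) : Prop :=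
  forall u v, u \in X -> v \in Y -> T u v.

Definition path3 (V : finType) (T : rel V) (S : {set V}) (x y : V) : Prop :=
  exists a b, [/\ uniq [:: x; a; b; y], [&& x \notin S, a \notin S, b \notin S & y \notin S],
                  T x a, T a b & T b y].

Definition path4 (V : finType) (T : rel V) (S : {set V}) (x y : V) : Prop :=
  exists a b c, [/\ uniq [:: x; a; b; c; y],
                    [&& x \notin S, a \notin S, b \notin S, c \notin S & y \notin S],
                    T x a, T a b & [/\ T b c & T c y]].

Definition inG (V : finType) (T : rel V) (x y : V) (S : {set V}) : Prop :=
  exists (z : V) (A B C : {set V}) (k : nat),
  [/\ tournament T /\ regular T, 1 <= k /\ #|V| = 6 * k + 3,
      [/\ uniq [:: x; y; z],
          ([disjoint [set x; y; z] & A :|: B :|: C :|: S]),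
          [/\ ([disjoint A & B :|: C :|: S]), ([disjoint B & C :|: S]) & ([disjoint C & S])]
          & [set x; y; z] :|: A :|: B :|: C :|: S = setT],
      [/\ #|A| = (2 * k).-1, #|C| = (2 * k).-1, #|B| = k + 2 & #|S| = k] /\
      [/\ regular_on T A, regular_on T C & regular_on T (z |: (B :|: S))] &
      [/\ dom T A (B :|: S), dom T (B :|: S) C, dom T C A, dom T C [set z] &
          [/\ dom T [set z] A,
              dom T [set x] ([set y; z] :|: A :|: S),
              dom T ([set x; z] :|: C :|: S) [set y],
              dom T [set y] (A :|: B) &
              dom T (B :|: C) [set x]]]].

Definition isoG (V : finType) (T : rel V) (x y : V) (S : {set V}) : Prop :=
  exists (V' : finType) (T' : rel V') (x' y' : V') (S' : {set V'}) (f : V -> V'),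
  [/\ bijective f, (forall u v, T' (f u) (f v) = T u v),
      [/\ f x = x', f y = y' & S' = f @: S] & inG T' x' y' S'].

From mathcomp Require Import all_boot zify.
From Stdlib Require Import Classical.
Set Implicit Arguments. Unset Strict Implicit. Unset Printing Implicit Defensive.

(* Let X be the out-neighbourhood of x and Y the in-neighbourhood of y in
   T - S - {x, y}, and P = X \ Y, Q = Y \ X.  Without an (x,y)-path of length 3,
   every vertex of Y beats every other vertex of X; hence X and Y share at most
   one vertex, a vertex of P is beaten by x, y and all of Y, and a vertex of Q
   beats x, y and all of X.  At a vertex of P whose in-degree inside P is at
   least the average (|P| - 1)/2, the in-degree n of a regular tournament then
   bounds |Y| + |P|/2, and dually |X| + |Q|/2, while regularity at x and y gives
   |X|, |Y| >= n - |S| - 1.  For 3|S| <= n - 1 this leaves only the case where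
   every estimate is tight, and tightness forces the structure of the family G,
   with A = P, C = Q and B the vertices outside X and Y.
   Without paths of length 4 as well, each vertex outside X and Y beats all of X
   or is beaten by all of Y; adding these vertices to the two estimates gives
   2|S| > n. *)

Definition converse (V : Type) (T : rel V) : rel V := fun u v => T v u.

Definition outdeg_in (V : finType) (T : rel V) (W : {set V}) (v : V) :=
  #|[set w in W | T v w]|.

Definition indeg_in (V : finType) (T : rel V) (W : {set V}) (v : V) :=
  outdeg_in (converse T) W v.

Lemma cardsU_disjoint (V : finType) (A B : {set V}) :
  [disjoint A & B] -> #|A :|: B| = #|A| + #|B|.
Proof. by move=> dAB; apply/eqP; rewrite (leq_card_setU A B).2. Qed.

Section Degrees.
Variables (V : finType) (T : rel V).

Lemma outdeg_in_setU (A B : {set V}) v : [disjoint A & B] ->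
  outdeg_in T (A :|: B) v = outdeg_in T A v + outdeg_in T B v.
Proof.
move=> dAB; rewrite /outdeg_in -cardsU_disjoint.
  by apply: eq_card => w; rewrite !inE andb_orl.
by apply: disjointW dAB; apply/subsetP=> w; rewrite inE => /andP[].
Qed.

Lemma outdeg_in_setC (W : {set V}) v :
  outdeg T v = outdeg_in T W v + outdeg_in T (~: W) v.
Proof.
rewrite -outdeg_in_setU ?setUCr; last by rewrite -setI_eq0 setICr.
by apply: eq_card => w; rewrite !inE.
Qed.

Lemma outdeg_in_set1 u v : outdeg_in T [set u] v = T v u.
Proof.
rewrite /outdeg_in; case: (boolP (T v u)) => Tvu.
  by rewrite -[true : nat](cards1 u); apply: eq_card => w; rewrite !inE andb_idr // => /eqP->.
apply/eqP; rewrite cards_eq0; apply/eqP/setP=> w.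
by rewrite !inE; case: eqP => // ->; apply: negbTE.
Qed.

Lemma outdeg_in_dom (W : {set V}) v : {in W, forall w, T v w} -> outdeg_in T W v = #|W|.
Proof. by move=> dW; apply: eq_card => w; rewrite !inE andb_idr //; apply: dW. Qed.

Lemma outdeg_in_setT v : outdeg_in T setT v = outdeg T v.
Proof. by apply: eq_card => w; rewrite !inE. Qed.

Lemma outdeg_in_le (W : {set V}) v : outdeg_in T W v <= outdeg T v.
Proof. by apply: subset_leq_card; apply/subsetP=> w; rewrite !inE => /andP[]. Qed.

Lemma outdeg_in_ge (A W : {set V}) v : A \subset W -> {in A, forall a, T v a} ->
  #|A| <= outdeg_in T W v.
Proof.
move=> AW dA; apply: subset_leq_card; apply/subsetP=> a aA.
by rewrite !inE (subsetP AW) ?dA.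
Qed.

End Degrees.

Section Tournament.
Variables (V : finType) (T : rel V).
Hypothesis tT : tournament T.

Lemma tournament_irrefl v : T v v = false.
Proof. by apply/negP=> Tvv; move: (tT.1 v v Tvv); rewrite Tvv. Qed.

Lemma tournament_asym u v : T u v -> T v u = false.
Proof. by move=> /tT.1 /negbTE. Qed.

Lemma tournament_total u v : u != v -> ~~ T u v -> T v u.
Proof. by move=> /tT.2; case: (T u v). Qed.

Lemma converse_tournament : tournament (converse T).
Proof. by split=> [u v /tT.1 //|u v /tT.2]; rewrite orbC. Qed.

Lemma outdeg_in_add_indeg_in (W : {set V}) v :
  outdeg_in T W v + indeg_in T W v = #|W :\ v|.
Proof.
rewrite /indeg_in /outdeg_in -cardsU_disjoint.
  apply: eq_card => w; rewrite !inE /converse.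
  case: (eqVneq w v) => [->|wv]; first by rewrite tournament_irrefl andbF.
  by rewrite -andb_orr (tT.2 v w) 1?eq_sym // andbT.
rewrite disjoints_subset; apply/subsetP=> w; rewrite !inE /converse.
by case Tvw: (T v w); rewrite ?andbF //= (tournament_asym Tvw) andbF.
Qed.

Lemma sum_indeg_in (W : {set V}) :
  (\sum_(v in W) indeg_in T W v).*2 = #|W| * #|W|.-1.
Proof.
have sum_rel (R : rel V) v : outdeg_in R W v = \sum_(w in W) R v w.
  rewrite /outdeg_in -sum1_card big_mkcond [RHS]big_mkcond /=.
  by apply: eq_bigr => w _; rewrite inE; case: (w \in W); case: (R v w).
have arcs : \sum_(v in W) indeg_in T W v = \sum_(v in W) outdeg_in T W v.
  rewrite /indeg_in; under eq_bigr do rewrite sum_rel.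
  by rewrite exchange_big; apply: eq_bigr => v _; rewrite sum_rel.
rewrite -addnn {1}arcs -big_split /= -sum_nat_const.
apply: eq_bigr => v vW; rewrite outdeg_in_add_indeg_in (cardsD1 v W) vW.
by rewrite add1n.
Qed.

Lemma exists_indeg_in_ge (W : {set V}) :
  0 < #|W| -> exists2 v, v \in W & #|W| <= 2 * indeg_in T W v + 1.
Proof.
move=> W0; case: (boolP [exists v in W, #|W| <= 2 * indeg_in T W v + 1]).
  by move=> /exists_inP.
move=> /exists_inPn small; exfalso.
have : \sum_(v in W) (2 * indeg_in T W v + 2) <= \sum_(v in W) #|W|.
  by apply: leq_sum => v /small; rewrite -ltnNge addn2 addn1.
rewrite big_split /= -big_distrr /= !sum_nat_const.
have := sum_indeg_in W; rewrite -muln2.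
by move: W0; set s := \sum_(_ in _) _; set c := #|W|; clear; nia.
Qed.

Lemma regular_on_indeg_in (W : {set V}) m : #|W| = 2 * m + 1 ->
  regular_on T W <-> {in W, forall v, indeg_in T W v = m}.
Proof.
move=> cW; have deg v : v \in W -> outdeg_in T W v + indeg_in T W v = 2 * m.
  by move=> vW; rewrite outdeg_in_add_indeg_in; move: cW; rewrite (cardsD1 v W) vW; lia.
split=> [rW v vW | inW v vW].
  have balanced : outdeg_in T W v = indeg_in T W v := rW v vW.
  by have := deg v vW; lia.
change (outdeg_in T W v = indeg_in T W v).
by have := deg v vW; have := inW v vW; lia.
Qed.

Lemma regular_on_indeg_in_le (W : {set V}) m : #|W| = 2 * m + 1 ->
  {in W, forall v, indeg_in T W v <= m} -> regular_on T W.
Proof.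
move=> cW small; apply/(regular_on_indeg_in cW) => v vW.
have sum_gap : \sum_(v in W) (m - indeg_in T W v) = 0.
  rewrite sumnB // sum_nat_const; have := sum_indeg_in W; rewrite cW -muln2.
  by set s := \sum_(_ in _) _; clear; nia.
move/eqP: sum_gap; rewrite sum_nat_eq0 => /forall_inP/(_ v vW).
by rewrite subn_eq0 => large; apply/eqP; rewrite eqn_leq small.
Qed.

Lemma regular_on_outside (W : {set V}) m : regular T -> #|~: W| = 2 * m ->
  {in W, forall w, m <= outdeg_in T (~: W) w /\ m <= indeg_in T (~: W) w} ->
  regular_on T W.
Proof.
move=> rT cWc big w wW; have [out_ge in_ge] := big w wW.
have outside := outdeg_in_add_indeg_in (~: W) w.
have := cardsD1 w (~: W); rewrite inE wW /= add0n => cWcw.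
have deg : outdeg T w = outdeg (converse T) w by exact: rT.
rewrite (outdeg_in_setC T W) (outdeg_in_setC (converse T) W) in deg.
change (outdeg_in T W w = indeg_in T W w).
move: outside; rewrite -cWcw cWc; rewrite /indeg_in in in_ge *; lia.
Qed.

End Tournament.

Lemma regular_on_converse (V : finType) (T : rel V) (W : {set V}) :
  regular_on (converse T) W -> regular_on T W.
Proof. by move=> rW v /rW/esym. Qed.

Lemma converse_regular (V : finType) (T : rel V) : regular T -> regular (converse T).
Proof. by move=> rT v; apply/esym/rT. Qed.

Lemma regular_outdeg (V : finType) (T : rel V) n v :
  tournament T -> regular T -> #|V| = 2 * n + 1 -> outdeg T v = n.
Proof.
move=> tT rT cV; have := outdeg_in_add_indeg_in tT setT v.
rewrite /indeg_in !outdeg_in_setT; change (outdeg (converse T) v) with (indeg T v).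
rewrite -(rT v).
by have := cardsD1 v setT; rewrite cardsT cV inE; lia.
Qed.

Lemma regular_indeg (V : finType) (T : rel V) n v :
  tournament T -> regular T -> #|V| = 2 * n + 1 -> indeg T v = n.
Proof.
by move=> tT rT; apply: (regular_outdeg _ (converse_tournament tT) (converse_regular rT)).
Qed.

Definition rest (V : finType) (S : {set V}) (x y : V) := ~: ([set x; y] :|: S).

Definition out_nbhd (V : finType) (T : rel V) (S : {set V}) (x y : V) :=
  [set v in rest S x y | T x v].

Definition in_nbhd (V : finType) (T : rel V) (S : {set V}) (x y : V) :=
  [set v in rest S x y | T v y].

Definition far (V : finType) (T : rel V) (S : {set V}) (x y : V) :=
  rest S x y :\: (out_nbhd T S x y :|: in_nbhd T S x y).

Section Neighbourhoods.
Variables (V : finType) (T : rel V) (S : {set V}) (x y : V).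

Lemma in_rest v : (v \in rest S x y) = [&& v \notin S, v != x & v != y].
Proof.
by rewrite !inE !negb_or; case: (v \in S); case: (v == x); case: (v == y).
Qed.

Lemma in_out_nbhd v :
  (v \in out_nbhd T S x y) = [&& v \notin S, v != x, v != y & T x v].
Proof. by rewrite inE in_rest -!andbA. Qed.

Lemma in_in_nbhd v :
  (v \in in_nbhd T S x y) = [&& v \notin S, v != x, v != y & T v y].
Proof. by rewrite inE in_rest -!andbA. Qed.

Lemma in_far v :
  (v \in far T S x y) = [&& v \notin S, v != x, v != y, ~~ T x v & ~~ T v y].
Proof.
rewrite in_setD in_setU in_out_nbhd in_in_nbhd in_rest.
by case: (v \in S); case: (v == x); case: (v == y); case: (T x v); case: (T v y).
Qed.

Lemma rest_sym : rest S y x = rest S x y.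
Proof. by rewrite /rest setUC [in RHS]setUC (setUC [set x]). Qed.

Lemma in_nbhd_converse : in_nbhd T S x y = out_nbhd (converse T) S y x.
Proof. by rewrite /out_nbhd rest_sym. Qed.

Lemma out_nbhd_converse : out_nbhd T S x y = in_nbhd (converse T) S y x.
Proof. by rewrite /in_nbhd rest_sym. Qed.

Lemma path3_converse : path3 (converse T) S y x -> path3 T S x y.
Proof.
case=> b [a [uq notS Tyb Tba Tax]]; exists a, b; split=> //.
  by rewrite -rev_uniq; exact: uq.
by case/and4P: notS => -> -> -> ->.
Qed.

Lemma out_nbhd_rest v : v \in out_nbhd T S x y -> v \in rest S x y.
Proof. by case/setIdP. Qed.

Lemma in_nbhd_rest v : v \in in_nbhd T S x y -> v \in rest S x y.
Proof. by case/setIdP. Qed.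

Lemma notin_rest_xy : (x \notin rest S x y) && (y \notin rest S x y).
Proof. by rewrite !in_rest !eqxx !andbF. Qed.

Lemma nbhds_converse :
  [set x; y] :|: out_nbhd T S x y :|: in_nbhd T S x y =
  [set y; x] :|: out_nbhd (converse T) S y x :|: in_nbhd (converse T) S y x.
Proof.
rewrite -(in_nbhd_converse) -(out_nbhd_converse); apply/setP=> v; rewrite !in_setU.
by case: (v \in [set x]); case: (v \in [set y]); rewrite ?orbT ?orbF // orbC.
Qed.

Lemma far_disjoint :
  [disjoint far T S x y & [set x; y] :|: out_nbhd T S x y :|: in_nbhd T S x y].
Proof.
rewrite disjoints_subset; apply/subsetP=> v /setDP[vR vXY].
rewrite in_setC -setUA in_setU negb_or vXY andbT.
by move: vR; rewrite in_rest !inE => /and3P[_ /negPf-> /negPf->].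
Qed.

Lemma disjoint_S_nbhds : x \notin S -> y \notin S ->
  [disjoint S & [set x; y] :|: out_nbhd T S x y :|: in_nbhd T S x y].
Proof.
move=> xS yS; rewrite disjoints_subset; apply/subsetP=> v vS.
rewrite in_setC !in_setU in_out_nbhd in_in_nbhd vS !orbF negb_or !in_set1.
by apply/andP; split; [apply: contraNneq xS | apply: contraNneq yS] => <-.
Qed.

Lemma card_rest_split :
  #|out_nbhd T S x y :|: in_nbhd T S x y| + #|far T S x y| = #|rest S x y|.
Proof.
rewrite -(cardsID (out_nbhd T S x y :|: in_nbhd T S x y) (rest S x y)) (setIidPr _) //.
by apply/subsetP=> v /setUP[/setIdP[]|/setIdP[]].
Qed.

Lemma disjoint_xy_rest : [disjoint [set x; y] & rest S x y].
Proof. by rewrite disjoints_subset /rest setCK subsetUl. Qed.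

End Neighbourhoods.

Section NoPath3.
Variables (V : finType) (T : rel V) (n : nat) (S : {set V}) (x y : V).
Hypotheses (tT : tournament T) (rT : regular T) (cV : #|V| = 2 * n + 1).
Hypotheses (xS : x \notin S) (yS : y \notin S) (xy : x != y).

Local Notation X := (out_nbhd T S x y).
Local Notation Y := (in_nbhd T S x y).

Lemma card_rest : #|rest S x y| + #|S| + 2 = 2 * n + 1.
Proof.
rewrite -cV -(cardsC ([set x; y] :|: S)) cardsU_disjoint ?cards2 ?xy /rest /=; first by lia.
by rewrite disjoints_subset; apply/subsetP=> v; rewrite !inE => /orP[] /eqP->.
Qed.

Lemma outdeg_x_split : n = #|X| + outdeg_in T S x + T x y.
Proof.
rewrite -(regular_outdeg x tT rT cV) (outdeg_in_setC T ([set x; y] :|: S)).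
rewrite !outdeg_in_setU ?outdeg_in_set1 ?(tournament_irrefl tT) ?disjoints1 ?inE //.
  by rewrite /out_nbhd /rest /outdeg_in; lia.
by rewrite disjoints_subset; apply/subsetP=> v; rewrite !inE => /orP[] /eqP->.
Qed.

Lemma out_nbhd_lower : n <= #|X| + #|S| + T x y.
Proof.
have : outdeg_in T S x <= #|S| by apply/subset_leq_card/subsetP=> v /setIdP[].
by have := outdeg_x_split; lia.
Qed.

Lemma dominated_by_y v : v \in rest S x y -> v \notin Y -> T y v.
Proof.
move=> vR vY; apply: (tournament_total tT); first by move: vR; rewrite in_rest => /and3P[].
by move: vY; rewrite inE vR.
Qed.

Lemma dominates_x v : v \in rest S x y -> v \notin X -> T v x.
Proof.
move=> vR vX; apply: (tournament_total tT); first by move: vR; rewrite in_rest eq_sym => /and3P[].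
by move: vX; rewrite inE vR.
Qed.

Lemma far_split b : ~ path4 T S x y -> b \in far T S x y ->
  [forall a in X, T b a] || [forall c in Y, T c b].
Proof.
move=> noP4 /setDP[bR]; rewrite in_setU negb_or => /andP[bX bY].
case: (boolP [forall a in X, T b a]) => //= /forall_inPn[a aX nTba].
apply/forall_inP=> c cY; apply: (tournament_total tT); first by apply: contraNneq bY => ->.
apply/negP=> Tbc; apply: noP4.
have Tab : T a b by apply: (tournament_total tT) nTba; apply: contraNneq bX => ->.
case/setIdP: aX => /[!in_rest] /and3P[aS ax ay] Txa.
case/setIdP: cY => /[!in_rest] /and3P[cS cx cy] Tcy.
move: bR; rewrite in_rest => /and3P[bS bx b_y].
have ab : a != b by apply: contraTneq Tab => ->; rewrite tournament_irrefl.
have ac : a != c by apply: contraTneq Tbc => <-; rewrite (tournament_asym tT Tab).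
have bc : b != c by apply: contraTneq Tbc => ->; rewrite tournament_irrefl.
exists a, b, c; split=> //.
  by rewrite /= !inE !negb_or (eq_sym x a) (eq_sym x b) (eq_sym x c) ax bx cx xy ab ac ay bc b_y cy.
by rewrite xS aS bS cS yS.
Qed.

Hypothesis noP3 : ~ path3 T S x y.

Lemma in_nbhd_dominates_out_nbhd a c : a \in X -> c \in Y -> a != c -> T c a.
Proof.
case/setIdP=> /[!in_rest] /and3P[aS ax ay] Txa; case/setIdP=> /[!in_rest] /and3P[cS cx cy] Tcy ac.
apply: (tournament_total tT ac); apply/negP=> Tac; apply: noP3; exists a, c; split=> //.
  by rewrite /= !inE !negb_or (eq_sym x a) (eq_sym x c) ax cx xy ac ay cy.
by rewrite xS aS cS yS.
Qed.

Lemma card_out_in_nbhd_le1 : #|X :&: Y| <= 1.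
Proof.
apply/card_le1_eqP=> u v /setIP[uX uY] /setIP[vX vY]; apply/eqP/negPn/negP=> vu.
have Tuv := in_nbhd_dominates_out_nbhd vX uY vu.
by move: (in_nbhd_dominates_out_nbhd uX vY); rewrite eq_sym vu (tournament_asym tT Tuv) => /(_ isT).
Qed.

Local Notation P := (X :\: Y).

(* The in-neighbourhood of p contains the disjoint sets {x, y}, Y, M and the
   in-neighbours of p in P. *)
Lemma indeg_in_P_bound (M : {set V}) p : p \in P ->
  [disjoint M & [set x; y] :|: X :|: Y] -> {in M, forall b, T b p} ->
  2 + #|Y| + #|M| + indeg_in T P p <= n.
Proof.
case/setDP=> pX pY dM Mp.
have Txp : T x p by case/setIdP: pX.
have Typ : T y p := dominated_by_y (out_nbhd_rest pX) pY.
have Yp : {in Y, forall c, T c p}.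
  by move=> c cY; apply: in_nbhd_dominates_out_nbhd => //; apply: contraNneq pY => ->.
have dxyY : [disjoint [set x; y] & Y].
  by apply: disjointWr (disjoint_xy_rest S x y); apply/subsetP=> v /in_nbhd_rest.
have dxyYM : [disjoint [set x; y] :|: Y & M].
  by rewrite disjoint_sym; apply: disjointWr dM; apply/setSU/subsetUl.
have dxyYMP : [disjoint [set x; y] :|: Y :|: M & P].
  rewrite disjoint_sym disjoints_subset; apply/subsetP=> v /setDP[vX vY].
  have vxyXY : v \in [set x; y] :|: X :|: Y by rewrite !in_setU vX orbT.
  have vxy := disjointFl (disjoint_xy_rest S x y) (out_nbhd_rest vX).
  by rewrite in_setC 2!in_setU vxy (disjointFl dM vxyXY) (negbTE vY).
have := outdeg_in_le (converse T) ([set x; y] :|: Y :|: M :|: P) p.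
rewrite !outdeg_in_setU ?disjoints1 ?inE // !outdeg_in_set1.
rewrite (@outdeg_in_dom _ (converse T) Y p Yp) (@outdeg_in_dom _ (converse T) M p Mp).
change (converse T p x) with (T x p); change (converse T p y) with (T y p).
change (outdeg (converse T) p) with (indeg T p).
by rewrite Txp Typ (regular_indeg p tT rT cV).
Qed.

Lemma card_P_bound (M : {set V}) : 0 < #|P| ->
  [disjoint M & [set x; y] :|: X :|: Y] -> {in M & P, forall b p, T b p} ->
  2 * (2 + #|Y| + #|M|) + #|P| <= 2 * n + 1.
Proof.
move=> P0 dM MP; have [p pP heavy] := exists_indeg_in_ge tT P0.
by have := indeg_in_P_bound pP dM (fun b bM => MP b p bM pP); lia.
Qed.

End NoPath3.

(* Reversing every arc exchanges the roles of x and y, of X and Y and of P and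
   Q; the lemmas about Q below are the lemmas about P for [converse T]. *)
Section NoPath3Dual.
Variables (V : finType) (T : rel V) (n : nat) (S : {set V}) (x y : V).
Hypotheses (tT : tournament T) (rT : regular T) (cV : #|V| = 2 * n + 1).
Hypotheses (xS : x \notin S) (yS : y \notin S) (xy : x != y).

Local Notation X := (out_nbhd T S x y).
Local Notation Y := (in_nbhd T S x y).
Local Notation Q := (Y :\: X).

Let tT' := converse_tournament tT.
Let rT' := converse_regular rT.
Let yx : y != x. Proof. by rewrite eq_sym. Qed.

Lemma in_nbhd_lower : n <= #|Y| + #|S| + T x y.
Proof. by rewrite in_nbhd_converse (out_nbhd_lower tT' rT' cV yS xS yx). Qed.

Hypothesis noP3 : ~ path3 T S x y.

Let noP3' : ~ path3 (converse T) S y x.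
Proof. by move/path3_converse. Qed.

Lemma card_Q_bound (M : {set V}) : 0 < #|Q| ->
  [disjoint M & [set x; y] :|: X :|: Y] -> {in M & Q, forall b q, T q b} ->
  2 * (2 + #|X| + #|M|) + #|Q| <= 2 * n + 1.
Proof.
rewrite nbhds_converse (out_nbhd_converse T) (in_nbhd_converse T).
exact: (card_P_bound tT' rT' cV yS xS yx noP3').
Qed.

Local Notation P := (X :\: Y).

Lemma no_path3_extremal : 3 <= n -> 3 * #|S| <= n - 1 ->
  [/\ T x y, n = 3 * #|S| + 1, #|X| = 2 * #|S|, #|Y| = 2 * #|S| & #|X :&: Y| = 1].
Proof.
move=> n3 hk.
have le1 := card_out_in_nbhd_le1 tT xS yS xy noP3.
have low_X := out_nbhd_lower tT rT cV xS yS xy; have low_Y := in_nbhd_lower.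
have Txy_le1 : T x y <= 1 by case: (T x y).
have cP := cardsID Y X; have cQ := cardsID X Y; rewrite setIC in cQ.
have P0 : 0 < #|P| by lia.
have Q0 : 0 < #|Q| by lia.
have d0 : [disjoint set0 & [set x; y] :|: X :|: Y] by rewrite -setI_eq0 set0I.
have noneP : {in set0 & P, forall b p, T b p} by move=> b p; rewrite inE.
have noneQ : {in set0 & Q, forall b q, T q b} by move=> b q; rewrite inE.
have := card_P_bound tT rT cV xS yS xy noP3 P0 d0 noneP.
have := card_Q_bound Q0 d0 noneQ.
rewrite cards0; case Txy: (T x y) in low_X low_Y Txy_le1 *; last by lia.
by move=> hQ hP; split => //; lia.
Qed.

Lemma no_path3_path4 : 5 <= n -> 2 * #|S| <= n -> path4 T S x y.
Proof.
move=> n5 hk; apply: NNPP => noP4.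
pose Min := [set b in far T S x y | [forall a in X, T b a]].
pose Mout := [set b in far T S x y | [forall c in Y, T c b]].
have far_sub : far T S x y \subset Min :|: Mout.
  apply/subsetP=> b bF; apply/setUP.
  by case/orP: (far_split tT xS yS xy noP4 bF) => ?; [left | right]; apply/setIdP.
have dM (M : {set V}) : M \subset far T S x y -> [disjoint M & [set x; y] :|: X :|: Y].
  by move=> MF; apply: disjointWl MF (far_disjoint _ _ _ _).
have MF (M : {set V}) (p : pred V) : [set b in M | p b] \subset M.
  by apply/subsetP=> b /setIdP[].
have split_rest := card_rest_split T S x y.
have cP := cardsID Y X; have cQ := cardsID X Y; rewrite setIC in cQ.
have le1 := card_out_in_nbhd_le1 tT xS yS xy noP3.
have low_X := out_nbhd_lower tT rT cV xS yS xy; have low_Y := in_nbhd_lower.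
have Txy_le1 : T x y <= 1 by case: (T x y).
have cXY := cardsUI X Y; have cR := card_rest cV xS yS xy.
have le_far := subset_leq_card far_sub; have [le_M _] := leq_card_setU Min Mout.
have P0 : 0 < #|P| by lia.
have Q0 : 0 < #|Q| by lia.
have MinP : {in Min & P, forall b p, T b p}.
  by move=> b p /setIdP[_ /forall_inP Xb] /setDP[pX _]; apply: Xb.
have MoutQ : {in Mout & Q, forall b q, T q b}.
  by move=> b q /setIdP[_ /forall_inP Yb] /setDP[qY _]; apply: Yb.
have := card_P_bound tT rT cV xS yS xy noP3 P0 (dM _ (MF _ _)) MinP.
have := card_Q_bound Q0 (dM _ (MF _ _)) MoutQ.
rewrite -/Min -/Mout; lia.
Qed.

End NoPath3Dual.

Section Extremal.
Variables (V : finType) (T : rel V) (n : nat) (S : {set V}) (x y : V).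
Hypotheses (tT : tournament T) (rT : regular T) (cV : #|V| = 2 * n + 1).
Hypotheses (xS : x \notin S) (yS : y \notin S) (xy : x != y).
Hypothesis noP3 : ~ path3 T S x y.

Local Notation X := (out_nbhd T S x y).
Local Notation Y := (in_nbhd T S x y).
Local Notation P := (X :\: Y).

Variables (k : nat) (z : V).
Hypotheses (cS : #|S| = k) (nk : n = 3 * k + 1) (Txy : T x y).
Hypotheses (cX : #|X| = 2 * k) (cY : #|Y| = 2 * k) (XYz : X :&: Y = [set z]).

Lemma card_P : #|P| = 2 * (k - 1) + 1.
Proof. by have := cardsID Y X; rewrite XYz cards1 cX; lia. Qed.

Lemma regular_on_P : regular_on T P.
Proof.
apply: (regular_on_indeg_in_le tT card_P) => p pP.
have none : {in set0, forall b, T b p} by move=> b; rewrite inE.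
have d0 : [disjoint set0 & [set x; y] :|: X :|: Y] by rewrite -setI_eq0 set0I.
have := indeg_in_P_bound tT rT cV xS yS xy noP3 pP d0 none.
by rewrite cards0 cY; lia.
Qed.

Lemma P_dominates_outside u v : u \in P -> v \notin [set x; y] :|: X :|: Y -> T u v.
Proof.
move=> uP vout; apply: (tournament_total tT).
  by apply: contraNneq vout => ->; case/setDP: uP => uX _; rewrite !in_setU uX orbT.
apply/negP=> Tvu.
have dv : [disjoint [set v] & [set x; y] :|: X :|: Y] by rewrite disjoints1.
have vu : {in [set v], forall b, T b u} by move=> b /set1P->.
have := indeg_in_P_bound tT rT cV xS yS xy noP3 uP dv vu.
by rewrite ((regular_on_indeg_in tT card_P).1 regular_on_P u uP) cards1 cY; lia.
Qed.

Lemma x_dominates_S s : s \in S -> T x s.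
Proof.
move=> sS; have := outdeg_x_split tT rT cV xS yS xy; rewrite Txy cX => degx.
have e : [set w in S | T x w] = S.
  apply/eqP; rewrite eqEcard -/(outdeg_in T S x) cS; apply/andP; split; last by lia.
  by apply/subsetP=> w /setIdP[].
by move: sS; rewrite -e => /setIdP[].
Qed.

End Extremal.

Section ExtremalStructure.
Variables (V : finType) (T : rel V) (n : nat) (S : {set V}) (x y : V).
Hypotheses (tT : tournament T) (rT : regular T) (cV : #|V| = 2 * n + 1).
Hypotheses (xS : x \notin S) (yS : y \notin S) (xy : x != y).
Hypothesis noP3 : ~ path3 T S x y.

Local Notation X := (out_nbhd T S x y).
Local Notation Y := (in_nbhd T S x y).
Local Notation Q := (Y :\: X).

Variables (k : nat) (z : V).
Hypotheses (cS : #|S| = k) (nk : n = 3 * k + 1) (Txy : T x y).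
Hypotheses (cX : #|X| = 2 * k) (cY : #|Y| = 2 * k) (XYz : X :&: Y = [set z]).

Let tT' := converse_tournament tT.
Let rT' := converse_regular rT.
Let yx : y != x. Proof. by rewrite eq_sym. Qed.
Let noP3' : ~ path3 (converse T) S y x. Proof. by move/path3_converse. Qed.
Let cX' : #|out_nbhd (converse T) S y x| = 2 * k. Proof. by rewrite -in_nbhd_converse. Qed.
Let cY' : #|in_nbhd (converse T) S y x| = 2 * k. Proof. by rewrite -out_nbhd_converse. Qed.
Let XYz' : out_nbhd (converse T) S y x :&: in_nbhd (converse T) S y x = [set z].
Proof. by rewrite -in_nbhd_converse -out_nbhd_converse setIC. Qed.

Lemma regular_on_Q : regular_on T Q.
Proof.
apply: regular_on_converse; rewrite (in_nbhd_converse T) (out_nbhd_converse T).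
exact: (regular_on_P tT' rT' cV yS xS yx noP3' cS nk Txy cX' cY' XYz').
Qed.

Lemma outside_dominates_Q u v : u \in Q -> v \notin [set x; y] :|: X :|: Y -> T v u.
Proof.
rewrite nbhds_converse (in_nbhd_converse T) (out_nbhd_converse T) => uQ vout.
change (converse T u v).
exact: (P_dominates_outside tT' rT' cV yS xS yx noP3' cS nk Txy cX' cY' XYz').
Qed.

Lemma S_dominates_y s : s \in S -> T s y.
Proof.
move=> sS; change (converse T y s).
exact: (x_dominates_S tT' rT' cV yS xS yx cS nk Txy cX' cY').
Qed.

Local Notation P := (X :\: Y).
Local Notation F := (far T S x y).

Let zXY : z \in X /\ z \in Y.
Proof. by apply/setIP; rewrite XYz set11. Qed.

Let z_facts : [/\ z \notin S, z != x, z != y, T x z & T z y].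
Proof.
case: zXY; rewrite in_out_nbhd in_in_nbhd => /and4P[zS zx zy Txz] /and4P[_ _ _ Tzy].
by split.
Qed.

Let rest_z v : v != x -> v != y -> v != z -> v \notin S -> ~~ (T x v && T v y).
Proof.
move=> vx vy vz vS; move: vz; apply: contraNN => /andP[Txv Tvy]; apply/eqP/set1P.
by rewrite -XYz inE in_out_nbhd in_in_nbhd vS vx vy Txv Tvy.
Qed.

Lemma extremal_partition :
  [/\ uniq [:: x; y; z], [disjoint [set x; y; z] & P :|: F :|: Q :|: S],
       [/\ [disjoint P & F :|: Q :|: S], [disjoint F & Q :|: S] & [disjoint Q & S]]
     , [set x; y; z] :|: P :|: F :|: Q :|: S = setT
     & ~: (z |: (F :|: S)) = [set x; y] :|: P :|: Q].
Proof.
have [zS zx zy Txz Tzy] := z_facts.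
have xz : x != z by rewrite eq_sym.
have yz : y != z by rewrite eq_sym.
have facts := (negbTE xS, negbTE yS, negbTE zS, negbTE xy, negbTE zx, negbTE zy,
  negbTE yx, negbTE xz, negbTE yz, tournament_irrefl tT, Txy, Txz, Tzy).
(* A vertex is classified by being x, y, z or in S, and by the arcs x -> v, v -> y. *)
rewrite /= !inE !negb_or xy xz yz; split=> //; try split;
  rewrite ?disjoints_subset; try apply/subsetP=> v; try apply/setP=> v; rewrite !inE;
  case: (eqVneq v x) => [->|vx]; rewrite ?facts ?eqxx //=;
  case: (eqVneq v y) => [->|vy]; rewrite ?facts ?eqxx //=;
  case: (eqVneq v z) => [->|vz]; rewrite ?facts ?eqxx //=;
  move: (rest_z vx vy vz) => /implyP; rewrite ?(negbTE vx) ?(negbTE vy) ?(negbTE vz);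
  by case: (v \in S); case: (T x v); case: (T v y).
Qed.

Let k_gt0 : 0 < k.
Proof. by have := subset_leq_card (subsetIl X Y); rewrite XYz cards1 cX; lia. Qed.

Let cP : #|P| = (2 * k).-1.
Proof. by have := cardsID Y X; rewrite XYz cards1 cX; lia. Qed.

Let cQ : #|Q| = (2 * k).-1.
Proof. by have := cardsID X Y; rewrite setIC XYz cards1 cY; lia. Qed.

Lemma card_far : #|F| = k + 2.
Proof.
have := card_rest_split T S x y; have := card_rest cV xS yS xy.
by have := cardsUI X Y; rewrite XYz cards1 cX cY cS; lia.
Qed.

Let outside_nbhds v : v \in F :|: S -> v \notin [set x; y] :|: X :|: Y.
Proof.
case/setUP=> [vF|vS]; apply/negP=> vN.
  by rewrite (disjointFr (far_disjoint T S x y) vF) in vN.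
by rewrite (disjointFr (disjoint_S_nbhds T xS yS) vS) in vN.
Qed.

Lemma dom_P_FS : dom T P (F :|: S).
Proof.
move=> u v uP /outside_nbhds.
exact: (P_dominates_outside tT rT cV xS yS xy noP3 cS nk Txy cX cY XYz uP).
Qed.

Lemma dom_FS_Q : dom T (F :|: S) Q.
Proof. by move=> u v /outside_nbhds uout vQ; apply: outside_dominates_Q vQ uout. Qed.

Lemma dom_Q_P : dom T Q P.
Proof.
move=> u v /setDP[uY uX] /setDP[vX _].
by apply: (in_nbhd_dominates_out_nbhd tT xS yS xy noP3 vX uY); apply: contraNneq uX => <-.
Qed.

Lemma dom_Q_z : dom T Q [set z].
Proof.
move=> u _ /setDP[uY uX] /set1P->; have [zX _] := zXY.
by apply: (in_nbhd_dominates_out_nbhd tT xS yS xy noP3 zX uY); apply: contraNneq uX => <-.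
Qed.

Lemma dom_z_P : dom T [set z] P.
Proof.
move=> _ v /set1P-> /setDP[vX vY]; have [_ zY] := zXY.
by apply: (in_nbhd_dominates_out_nbhd tT xS yS xy noP3 vX zY); apply: contraNneq vY => ->.
Qed.

Lemma dom_x : dom T [set x] ([set y; z] :|: P :|: S).
Proof.
have [_ _ _ Txz _] := z_facts.
move=> _ v /set1P-> /setUP[/setUP[/set2P[]->|/setDP[/setIdP[_ Txv] _]] //|].
exact: (x_dominates_S tT rT cV xS yS xy cS nk Txy cX cY).
Qed.

Lemma dom_y : dom T ([set x; z] :|: Q :|: S) [set y].
Proof.
have [_ _ _ _ Tzy] := z_facts.
move=> u _ /setUP[/setUP[/set2P[]->|/setDP[/setIdP[_ Tuy] _]]|uS] /set1P-> //.
exact: S_dominates_y.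
Qed.

Lemma dom_y_PF : dom T [set y] (P :|: F).
Proof.
move=> _ v /set1P-> /setUP[/setDP[vX vY]|/setDP[vR]].
  exact: (dominated_by_y tT (out_nbhd_rest vX)).
move=> vXY; apply: (dominated_by_y tT vR); apply: contra vXY => vY.
by apply/setUP; right.
Qed.

Lemma dom_FQ_x : dom T (F :|: Q) [set x].
Proof.
move=> u _ /setUP[/setDP[uR uXY]|/setDP[uY uX]] /set1P->.
  apply: (dominates_x tT uR); apply: contra uXY => uX.
  by apply/setUP; left.
exact: (dominates_x tT (in_nbhd_rest uY)).
Qed.

Lemma regular_on_z_far_S : regular_on T (z |: (F :|: S)).
Proof.
have [_ _ _ _ Zc] := extremal_partition.
have [zS _ _ Txz _] := z_facts.
have [xR yR] := andP (notin_rest_xy S x y).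
have PR : P \subset rest S x y by apply/subsetP=> v /setDP[/out_nbhd_rest].
have QR : Q \subset rest S x y by apply/subsetP=> v /setDP[/in_nbhd_rest].
have half (u : V) (W : {set V}) : u \in [set x; y] -> W \subset P :|: Q ->
    W \subset rest S x y -> #|W| = (2 * k).-1 ->
    #|u |: W| = 2 * k /\ u |: W \subset ~: (z |: (F :|: S)).
  move=> uxy WPQ WR cW; split.
    rewrite cardsU1 cW; case: (boolP (u \in W)) => [/(subsetP WR)|_].
      by case/set2P: uxy => ->; rewrite ?(negbTE xR) ?(negbTE yR).
    by rewrite /= add1n prednK // muln_gt0.
  rewrite Zc; apply/subsetP=> v /setU1P[->|/(subsetP WPQ)/setUP[vP|vQ]].
  - by apply/setUP; left; apply/setUP; left.
  - by apply/setUP; left; apply/setUP; right.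
  - by apply/setUP; right.
have [cyP syP] := half y P (set22 x y) (subsetUl P Q) PR cP.
have [cxP sxP] := half x P (set21 x y) (subsetUl P Q) PR cP.
have [cyQ syQ] := half y Q (set22 x y) (subsetUr P Q) QR cQ.
have [cxQ sxQ] := half x Q (set21 x y) (subsetUr P Q) QR cQ.
have zFS : z \notin F :|: S by rewrite in_setU negb_or in_far Txz (negbTE zS) !andbF.
have dFS : [disjoint F & S].
  by rewrite disjoints_subset; apply/subsetP=> v; rewrite in_far inE => /andP[].
have cZc : #|~: (z |: (F :|: S))| = 2 * (2 * k).
  have := cardsC (z |: (F :|: S)).
  rewrite cV nk cardsU1 zFS cardsU_disjoint // card_far cS add1n.
  by move=> e; clear -e; lia.
have [_ _ _ _ Tzy] := z_facts.
have FS_F w : w \in F -> w \in F :|: S by move=> wF; apply/setUP; left.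
have FS_S w : w \in S -> w \in F :|: S by move=> wS; apply/setUP; right.
apply: (regular_on_outside tT rT cZc) => w /setU1P[->|/setUP[wF|wS]]; rewrite /indeg_in.
- rewrite -{1}cyP -cxQ; split; apply: outdeg_in_ge => // v /setU1P[->|vPQ] //.
  + exact: dom_z_P (set11 z) vPQ.
  + exact: dom_Q_z vPQ (set11 z).
- rewrite -{1}cxQ -cyP; split; apply: outdeg_in_ge => // v /setU1P[->|vPQ].
  + by apply: dom_FQ_x (set11 x); apply/setUP; left.
  + exact: dom_FS_Q (FS_F w wF) vPQ.
  + by apply: dom_y_PF (set11 y) _; apply/setUP; right.
  + exact: dom_P_FS vPQ (FS_F w wF).
- rewrite -{1}cyQ -cxP; split; apply: outdeg_in_ge => // v /setU1P[->|vPQ].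
  + exact: S_dominates_y wS.
  + exact: dom_FS_Q (FS_S w wS) vPQ.
  + exact: (x_dominates_S tT rT cV xS yS xy cS nk Txy cX cY wS).
  + exact: dom_P_FS vPQ (FS_S w wS).
Qed.

Lemma extremal_inG : inG T x y S.
Proof.
have [uq dxyz [dP dF dQ] cover _] := extremal_partition.
exists z, P, F, Q, k; split=> //.
- by rewrite cV nk; split; [exact: k_gt0 | clear; lia].
- split; first by split; rewrite ?cP ?cQ ?card_far.
  split; [exact: (regular_on_P tT rT cV xS yS xy noP3 cS nk Txy cX cY XYz) |
          exact: regular_on_Q | exact: regular_on_z_far_S].
- split; [exact: dom_P_FS | exact: dom_FS_Q | exact: dom_Q_P | exact: dom_Q_z |].
  split; [exact: dom_z_P | exact: dom_x | exact: dom_y | exact: dom_y_PF | exact: dom_FQ_x].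
Qed.

End ExtremalStructure.

Lemma inG_isoG (V : finType) (T : rel V) (x y : V) (S : {set V}) :
  inG T x y S -> isoG T x y S.
Proof.
by move=> GT; exists V, T, x, y, S, id; split=> //; [exists id | rewrite imset_id].
Qed.

Theorem lemma3p2 (V : finType) (T : rel V) (n : nat) (S : {set V}) (x y : V) :
  tournament T -> regular T -> #|V| = 2 * n + 1 ->
  x \notin S -> y \notin S -> x != y ->
  (3 <= n -> 3 * #|S| <= n - 1 -> ~ isoG T x y S -> path3 T S x y) /\
  (5 <= n -> 2 * #|S| <= n -> ~ path3 T S x y -> path4 T S x y).
Proof.
move=> tT rT cV xS yS xy; split=> [n3 hk notG | n5 hk noP3]; last first.
  exact: (no_path3_path4 tT rT cV xS yS xy noP3 n5 hk).
apply: NNPP => noP3; apply: notG.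
have [Txy nk cX cY cXY] := no_path3_extremal tT rT cV xS yS xy noP3 n3 hk.
have /cards1P[z XYz] : #|out_nbhd T S x y :&: in_nbhd T S x y| == 1 by rewrite cXY.
exact/inG_isoG/(extremal_inG tT rT cV xS yS xy noP3 (erefl _) nk Txy cX cY XYz).
Qed.
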